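(* Let $\mathring{\mathcal{M}}$ denote the linear space of real symmetric trace-free $2\times2$ matrices, and let $$\Lambda = \Big\{\tfrac15(3e_1\pm 4e_2),\ \tfrac15(4e_1\pm 3e_2),\ \tfrac15(-3e_1\mp 4e_2),\ \tfrac15(-4e_1\mp 3e_2)\Big\}\subset\mathbb{S}^1.$$ There exists a family of positive smooth functions $\{\gamma_k\in C^\infty(\mathring{\mathcal{M}}) : k\in\Lambda\}$ such that for every $\mathring{R}\in\mathring{\mathcal{M}}$: $$\gamma_{-k}(\mathring{R}) = \gamma_k(\mathring{R}),\qquad \mathring{R} = \sum_{k\in\Lambda}(\gamma_k(\mathring{R}))^2\,(k\mathring{\otimes} k),\qquad \gamma_k(\mathring{R}) \le C(1+|\mathring{R}|)^{1/2}$$ for all $k\in\Lambda$, where $C$ is an absolute constant.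
   Context: For $f,g\in\mathbb{R}^2$, $f\mathring{\otimes} g$ denotes the trace-free part of the tensor product: $f\mathring{\otimes} g = \begin{pmatrix}\frac12 f_1g_1-\frac12 f_2g_2 & f_1g_2\\ f_2g_1 & \frac12 f_2g_2-\frac12 f_1g_1\end{pmatrix}$. $e_1,e_2$ are the standard basis vectors of $\mathbb{R}^2$. *)

From Stdlib Require Import Reals List.
From Coquelicot Require Import Coquelicot.
Import ListNotations.
Open Scope R_scope.

Definition vec2 := (R * R)%type.
Definition vopp (k : vec2) : vec2 := (- fst k, - snd k).

Record mat2 := Mat2 { m11 : R; m12 : R; m21 : R; m22 : R }.

Definition madd (A B : mat2) : mat2 :=
  Mat2 (m11 A + m11 B) (m12 A + m12 B) (m21 A + m21 B) (m22 A + m22 B).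
Definition mscale (c : R) (A : mat2) : mat2 :=
  Mat2 (c * m11 A) (c * m12 A) (c * m21 A) (c * m22 A).
Definition mzero : mat2 := Mat2 0 0 0 0.

Definition mnorm (A : mat2) : R :=
  sqrt (m11 A ^ 2 + m12 A ^ 2 + m21 A ^ 2 + m22 A ^ 2).

(* Trace-free part of the tensor product f (x) g. *)
Definition tfotimes (f g : vec2) : mat2 :=
  Mat2 (/2 * fst f * fst g - /2 * snd f * snd g) (fst f * snd g)
       (snd f * fst g) (/2 * snd f * snd g - /2 * fst f * fst g).

(* The space of real symmetric trace-free 2x2 matrices, parametrized by its
   linear coordinates (a, b) |-> [[a, b], [b, -a]] (a linear isomorphism
   R^2 ~ M°). Every element of M° is of this form. *)
Definition tfsym (a b : R) : mat2 := Mat2 a b b (- a).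
Definition is_tfsym (A : mat2) : Prop := m12 A = m21 A /\ m11 A + m22 A = 0.

Definition jcont (f : R -> R -> R) : Prop :=
  forall x y, continuous (fun p : R * R => f (fst p) (snd p)) (x, y).

Fixpoint Cn (n : nat) (f : R -> R -> R) : Prop :=
  match n with
  | O => jcont f
  | S m => jcont f /\
           (forall x y, ex_derive (fun t => f t y) x /\ ex_derive (fun t => f x t) y) /\
           Cn m (fun x y => Derive (fun t => f t y) x) /\
           Cn m (fun x y => Derive (fun t => f x t) y)
  end.

Definition smooth2 (f : R -> R -> R) : Prop := forall n, Cn n f.

(* A function on M° is smooth iff it is smooth in the linear coordinates. *)
Definition smooth_on_tfsym (g : mat2 -> R) : Prop :=
  smooth2 (fun a b => g (tfsym a b)).

Definition Lambda : list vec2 :=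
  [ (3/5, 4/5); (3/5, -(4/5)); (4/5, 3/5); (4/5, -(3/5));
    (-(3/5), -(4/5)); (-(3/5), 4/5); (-(4/5), -(3/5)); (-(4/5), 3/5) ].

Definition msum_Lambda (F : vec2 -> mat2) : mat2 :=
  fold_right (fun k acc => madd (F k) acc) mzero Lambda.

(** Write a trace-free symmetric matrix as [tfsym a b] and put
    [k ⊗̊ k = tfsym (tfa k) (tfb k)].  Over [Lambda] the coordinates [tfa] and
    [tfb] have vanishing sums and vanishing mixed moment, so the weights
    [2 <R> + a tfa k / Σ tfa² + b tfb k / Σ tfb²], with [<R> = sqrt (1 + a² + b²)],
    reproduce [tfsym a b] exactly.  The bracket [<R>] is smooth and dominates
    [|a|] and [|b|], so on [Lambda] each weight is positive and at most [4 <R>];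
    [gamma_k] is its square root. *)

From Stdlib Require Import Reals List Lra FunctionalExtensionality.
From Coquelicot Require Import Coquelicot.
Open Scope R_scope.

Definition Dx (f : R -> R -> R) (x y : R) : R := Derive (fun t => f t y) x.
Definition Dy (f : R -> R -> R) (x y : R) : R := Derive (fun t => f x t) y.

Lemma jcont_const c : jcont (fun _ _ => c).
Proof. intros x y. apply continuous_const. Qed.

Lemma jcont_x : jcont (fun x _ => x).
Proof. intros x y. apply continuous_fst. Qed.

Lemma jcont_y : jcont (fun _ y => y).
Proof. intros x y. apply continuous_snd. Qed.

Lemma jcont_plus f g : jcont f -> jcont g -> jcont (fun x y => f x y + g x y).
Proof.
  intros Hf Hg x y.
  apply (continuous_plus (fun p : R * R => f (fst p) (snd p)) (fun p => g (fst p) (snd p)));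
    auto.
Qed.

Lemma jcont_mult f g : jcont f -> jcont g -> jcont (fun x y => f x y * g x y).
Proof.
  intros Hf Hg x y.
  apply (continuous_mult (fun p : R * R => f (fst p) (snd p)) (fun p => g (fst p) (snd p)));
    auto.
Qed.

Lemma jcont_inv f : jcont f -> (forall x y, f x y <> 0) -> jcont (fun x y => / f x y).
Proof.
  intros Hf Hn x y.
  apply (continuous_comp (fun p : R * R => f (fst p) (snd p)) Rinv); auto.
  apply continuous_Rinv; auto.
Qed.

Lemma jcont_sqrt f : jcont f -> jcont (fun x y => sqrt (f x y)).
Proof.
  intros Hf x y.
  apply (continuous_comp (fun p : R * R => f (fst p) (snd p)) sqrt); auto.
  apply continuous_sqrt.
Qed.

Lemma Cn_ext n f g : (forall x y, f x y = g x y) -> Cn n f -> Cn n g.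
Proof.
  intros Hfg.
  replace g with f; [easy|].
  apply functional_extensionality; intro x; apply functional_extensionality; intro y.
  apply Hfg.
Qed.

Lemma Cn_S_intro n f dfx dfy :
  jcont f ->
  (forall x y, is_derive (fun t => f t y) x (dfx x y)) ->
  (forall x y, is_derive (fun t => f x t) y (dfy x y)) ->
  Cn n dfx -> Cn n dfy -> Cn (S n) f.
Proof.
  intros Hc Hx Hy Hdx Hdy.
  split; [exact Hc|]. split; [|split].
  - intros x y. split; eexists; [apply Hx|apply Hy].
  - apply (Cn_ext n dfx); [|exact Hdx].
    intros x y. symmetry. apply is_derive_unique, Hx.
  - apply (Cn_ext n dfy); [|exact Hdy].
    intros x y. symmetry. apply is_derive_unique, Hy.
Qed.

Lemma Cn_S_inv n f :
  Cn (S n) f ->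
  jcont f /\
  (forall x y, is_derive (fun t => f t y) x (Dx f x y)) /\
  (forall x y, is_derive (fun t => f x t) y (Dy f x y)) /\
  Cn n (Dx f) /\ Cn n (Dy f).
Proof.
  intros (Hc & Hd & Hdx & Hdy).
  split; [exact Hc|]. split; [|split; [|split]]; auto.
  - intros x y. apply Derive_correct, Hd.
  - intros x y. apply Derive_correct, Hd.
Qed.

Lemma Cn_pred n f : Cn (S n) f -> Cn n f.
Proof.
  revert f; induction n as [|n IH]; intros f Hf.
  - apply Hf.
  - destruct Hf as (Hc & Hd & Hdx & Hdy).
    exact (conj Hc (conj Hd (conj (IH _ Hdx) (IH _ Hdy)))).
Qed.

Lemma Cn_const n c : Cn n (fun _ _ => c).
Proof.
  revert c; induction n as [|n IH]; intro c; [apply jcont_const|].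
  apply (Cn_S_intro n _ (fun _ _ => 0) (fun _ _ => 0)); auto using jcont_const;
    intros; apply (is_derive_const (K := R_AbsRing) (V := R_NormedModule)).
Qed.

Lemma Cn_x n : Cn n (fun x _ => x).
Proof.
  destruct n as [|n]; [apply jcont_x|].
  apply (Cn_S_intro n _ (fun _ _ => 1) (fun _ _ => 0)); auto using jcont_x, Cn_const;
    intros; [apply (is_derive_id (K := R_AbsRing))|apply (is_derive_const (K := R_AbsRing) (V := R_NormedModule))].
Qed.

Lemma Cn_y n : Cn n (fun _ y => y).
Proof.
  destruct n as [|n]; [apply jcont_y|].
  apply (Cn_S_intro n _ (fun _ _ => 0) (fun _ _ => 1)); auto using jcont_y, Cn_const;
    intros; [apply (is_derive_const (K := R_AbsRing) (V := R_NormedModule))|apply (is_derive_id (K := R_AbsRing))].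
Qed.

Lemma Cn_plus n f g : Cn n f -> Cn n g -> Cn n (fun x y => f x y + g x y).
Proof.
  revert f g; induction n as [|n IH]; intros f g Hf Hg; [now apply jcont_plus|].
  destruct (Cn_S_inv n f Hf) as (Fc & Fx & Fy & Fdx & Fdy).
  destruct (Cn_S_inv n g Hg) as (Gc & Gx & Gy & Gdx & Gdy).
  apply (Cn_S_intro n _ (fun x y => Dx f x y + Dx g x y) (fun x y => Dy f x y + Dy g x y));
    auto using jcont_plus; intros x y.
  - apply (is_derive_plus (fun t => f t y) (fun t => g t y)); auto.
  - apply (is_derive_plus (fun t => f x t) (fun t => g x t)); auto.
Qed.

Lemma Cn_mult n f g : Cn n f -> Cn n g -> Cn n (fun x y => f x y * g x y).
Proof.
  revert f g; induction n as [|n IH]; intros f g Hf Hg; [now apply jcont_mult|].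
  pose proof (Cn_pred n f Hf) as Hf'. pose proof (Cn_pred n g Hg) as Hg'.
  destruct (Cn_S_inv n f Hf) as (Fc & Fx & Fy & Fdx & Fdy).
  destruct (Cn_S_inv n g Hg) as (Gc & Gx & Gy & Gdx & Gdy).
  apply (Cn_S_intro n _ (fun x y => Dx f x y * g x y + f x y * Dx g x y)
                        (fun x y => Dy f x y * g x y + f x y * Dy g x y));
    auto using jcont_mult, Cn_plus; intros x y.
  - apply (is_derive_mult (fun t => f t y) (fun t => g t y)); auto using Rmult_comm.
  - apply (is_derive_mult (fun t => f x t) (fun t => g x t)); auto using Rmult_comm.
Qed.

Lemma Cn_inv n f : Cn n f -> (forall x y, f x y <> 0) -> Cn n (fun x y => / f x y).
Proof.
  revert f; induction n as [|n IH]; intros f Hf Hn; [now apply jcont_inv|].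
  pose proof (IH f (Cn_pred n f Hf) Hn) as Hinv.
  destruct (Cn_S_inv n f Hf) as (Fc & Fx & Fy & Fdx & Fdy).
  apply (Cn_S_intro n _ (fun x y => -1 * Dx f x y * (/ f x y * / f x y))
                        (fun x y => -1 * Dy f x y * (/ f x y * / f x y)));
    auto using jcont_inv, Cn_mult, Cn_const; intros x y.
  - replace (-1 * Dx f x y * (/ f x y * / f x y)) with (- Dx f x y / f x y ^ 2)
      by (field; apply Hn).
    now apply (is_derive_inv (fun t => f t y)).
  - replace (-1 * Dy f x y * (/ f x y * / f x y)) with (- Dy f x y / f x y ^ 2)
      by (field; apply Hn).
    now apply (is_derive_inv (fun t => f x t)).
Qed.

Lemma Cn_sqrt n f : Cn n f -> (forall x y, 0 < f x y) -> Cn n (fun x y => sqrt (f x y)).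
Proof.
  revert f; induction n as [|n IH]; intros f Hf Hp; [now apply jcont_sqrt|].
  assert (Hs : forall x y, 0 < sqrt (f x y)) by (intros; apply sqrt_lt_R0, Hp).
  assert (Hinv : Cn n (fun x y => / sqrt (f x y))).
  { apply (Cn_inv n (fun x y => sqrt (f x y))).
    - exact (IH f (Cn_pred n f Hf) Hp).
    - intros x y. apply Rgt_not_eq, Hs. }
  destruct (Cn_S_inv n f Hf) as (Fc & Fx & Fy & Fdx & Fdy).
  apply (Cn_S_intro n _ (fun x y => Dx f x y * (/ 2 * / sqrt (f x y)))
                        (fun x y => Dy f x y * (/ 2 * / sqrt (f x y))));
    auto using jcont_sqrt, Cn_mult, Cn_const; intros x y; specialize (Hs x y).
  - replace (Dx f x y * (/ 2 * / sqrt (f x y))) with (Dx f x y / (2 * sqrt (f x y)))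
      by (field; lra).
    now apply (is_derive_sqrt (fun t => f t y)).
  - replace (Dy f x y * (/ 2 * / sqrt (f x y))) with (Dy f x y / (2 * sqrt (f x y)))
      by (field; lra).
    now apply (is_derive_sqrt (fun t => f x t)).
Qed.

Lemma tfotimes_vopp f g : tfotimes (vopp f) (vopp g) = tfotimes f g.
Proof. unfold tfotimes, vopp; cbn; f_equal; ring. Qed.

Lemma is_tfsym_exists_tfsym A : is_tfsym A -> exists a b, A = tfsym a b.
Proof.
  destruct A as [a b c d]; intros [Hbc Had]; cbn in *.
  exists a, b. unfold tfsym. f_equal; lra.
Qed.

Lemma mscale_tfsym c a b : mscale c (tfsym a b) = tfsym (c * a) (c * b).
Proof. unfold mscale, tfsym; cbn; f_equal; ring. Qed.

Definition tfa (k : vec2) : R := m11 (tfotimes k k).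
Definition tfb (k : vec2) : R := m12 (tfotimes k k).

Lemma tfotimes_diag k : tfotimes k k = tfsym (tfa k) (tfb k).
Proof. unfold tfotimes, tfsym, tfa, tfb; cbn; f_equal; ring. Qed.

Definition sum_Lambda (f : vec2 -> R) : R := fold_right (fun k acc => f k + acc) 0 Lambda.

Lemma msum_Lambda_tfsym (f g : vec2 -> R) :
  msum_Lambda (fun k => tfsym (f k) (g k)) = tfsym (sum_Lambda f) (sum_Lambda g).
Proof. unfold msum_Lambda, sum_Lambda, Lambda, madd, mzero, tfsym; cbn; f_equal; ring. Qed.

Lemma msum_Lambda_ext_in (F G : vec2 -> mat2) :
  (forall k, In k Lambda -> F k = G k) -> msum_Lambda F = msum_Lambda G.
Proof.
  unfold msum_Lambda; generalize Lambda as L.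
  induction L as [|k L IH]; intros HFG; cbn; [reflexivity|].
  rewrite HFG, IH; [reflexivity| |].
  - intros k' Hk'. apply HFG. now right.
  - now left.
Qed.

Lemma sum_Lambda_lincomb (p q r : R) (u v w : vec2 -> R) :
  sum_Lambda (fun k => p * u k + q * v k + r * w k)
  = p * sum_Lambda u + q * sum_Lambda v + r * sum_Lambda w.
Proof. unfold sum_Lambda, Lambda; cbn; ring. Qed.

Lemma Lambda_moments :
  sum_Lambda tfa = 0 /\ sum_Lambda tfb = 0 /\
  sum_Lambda (fun k => tfa k * tfa k) = 98 / 625 /\
  sum_Lambda (fun k => tfa k * tfb k) = 0 /\
  sum_Lambda (fun k => tfb k * tfb k) = 1152 / 625.
Proof. unfold sum_Lambda, Lambda, tfa, tfb, tfotimes; cbn; repeat split; field. Qed.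

Definition bracket (a b : R) : R := sqrt (1 + a * a + b * b).

(* The coefficients are the reciprocals of the second moments in [Lambda_moments]. *)
Definition weight (k : vec2) (a b : R) : R :=
  2 * bracket a b + 625 / 98 * a * tfa k + 625 / 1152 * b * tfb k.

Lemma weight_vopp k a b : weight (vopp k) a b = weight k a b.
Proof. unfold weight, tfa, tfb. now rewrite tfotimes_vopp. Qed.

Lemma sum_Lambda_weight_tfa a b : sum_Lambda (fun k => weight k a b * tfa k) = a.
Proof.
  destruct Lambda_moments as (Ha & _ & Haa & Hab & _).
  replace (fun k => weight k a b * tfa k) with
    (fun k => 2 * bracket a b * tfa k + 625 / 98 * a * (tfa k * tfa k)
              + 625 / 1152 * b * (tfa k * tfb k))
    by (apply functional_extensionality; intro k; unfold weight; ring).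
  rewrite sum_Lambda_lincomb, Ha, Haa, Hab. field.
Qed.

Lemma sum_Lambda_weight_tfb a b : sum_Lambda (fun k => weight k a b * tfb k) = b.
Proof.
  destruct Lambda_moments as (_ & Hb & _ & Hab & Hbb).
  replace (fun k => weight k a b * tfb k) with
    (fun k => 2 * bracket a b * tfb k + 625 / 98 * a * (tfa k * tfb k)
              + 625 / 1152 * b * (tfb k * tfb k))
    by (apply functional_extensionality; intro k; unfold weight; ring).
  rewrite sum_Lambda_lincomb, Hb, Hab, Hbb. field.
Qed.

Lemma msum_Lambda_weight a b :
  msum_Lambda (fun k => mscale (weight k a b) (tfotimes k k)) = tfsym a b.
Proof.
  replace (fun k => mscale (weight k a b) (tfotimes k k)) with
    (fun k => tfsym (weight k a b * tfa k) (weight k a b * tfb k))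
    by (apply functional_extensionality; intro k; now rewrite tfotimes_diag, mscale_tfsym).
  now rewrite msum_Lambda_tfsym, sum_Lambda_weight_tfa, sum_Lambda_weight_tfb.
Qed.

Lemma bracket_bounds a b :
  0 < bracket a b /\ - bracket a b < a < bracket a b /\ - bracket a b < b < bracket a b.
Proof.
  unfold bracket.
  assert (H1 : 0 < 1 + a * a + b * b) by nra.
  pose proof (sqrt_lt_R0 _ H1) as Hpos.
  pose proof (sqrt_sqrt _ (Rlt_le _ _ H1)) as Hsq.
  repeat split; nra.
Qed.

Lemma bracket_le_mnorm a b : bracket a b <= 1 + mnorm (tfsym a b).
Proof.
  unfold bracket, mnorm; cbn [tfsym m11 m12 m21 m22].
  set (S := sqrt (a ^ 2 + b ^ 2 + b ^ 2 + (- a) ^ 2)).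
  assert (HS0 : 0 <= S) by apply sqrt_pos.
  assert (HS2 : S * S = a ^ 2 + b ^ 2 + b ^ 2 + (- a) ^ 2) by (apply sqrt_sqrt; nra).
  rewrite <- (sqrt_square (1 + S)) by lra.
  apply sqrt_le_1_alt. nra.
Qed.

Lemma weight_pos k a b : In k Lambda -> 0 < weight k a b.
Proof.
  intro Hk. destruct (bracket_bounds a b) as (Hs & [Ha1 Ha2] & [Hb1 Hb2]).
  unfold weight, tfa, tfb, tfotimes.
  repeat (destruct Hk as [<-|Hk]; [cbn [fst snd m11 m12]; lra|]). contradiction.
Qed.

Lemma weight_le k a b : In k Lambda -> weight k a b <= 4 * bracket a b.
Proof.
  intro Hk. destruct (bracket_bounds a b) as (Hs & [Ha1 Ha2] & [Hb1 Hb2]).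
  unfold weight, tfa, tfb, tfotimes.
  repeat (destruct Hk as [<-|Hk]; [cbn [fst snd m11 m12]; lra|]). contradiction.
Qed.

Lemma sqrt_weight_le k a b :
  In k Lambda -> sqrt (weight k a b) <= 2 * sqrt (1 + mnorm (tfsym a b)).
Proof.
  intro Hk.
  pose proof (weight_le k a b Hk). pose proof (bracket_le_mnorm a b).
  apply Rle_trans with (sqrt (4 * (1 + mnorm (tfsym a b)))).
  - apply sqrt_le_1_alt. lra.
  - rewrite sqrt_mult_alt by lra.
    replace 4 with (2 * 2) by ring. rewrite sqrt_square by lra. lra.
Qed.

Lemma smooth2_sqrt_weight k : In k Lambda -> smooth2 (fun a b => sqrt (weight k a b)).
Proof.
  intros Hk n.
  apply (Cn_sqrt n (weight k)); [|intros; now apply weight_pos].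
  unfold weight, bracket.
  repeat first [ apply Cn_const | apply Cn_x | apply Cn_y
               | apply Cn_plus | apply Cn_mult | apply Cn_sqrt ].
  intros; nra.
Qed.

Definition gamma_Lambda (k : vec2) (A : mat2) : R := sqrt (weight k (m11 A) (m12 A)).

Theorem lemma4p1 :
  exists (C : R) (gamma : vec2 -> mat2 -> R),
    (forall k, In k Lambda -> smooth_on_tfsym (gamma k)) /\
    forall Rm : mat2, is_tfsym Rm ->
      (forall k, In k Lambda -> 0 < gamma k Rm) /\
      (forall k, In k Lambda -> gamma (vopp k) Rm = gamma k Rm) /\
      Rm = msum_Lambda (fun k => mscale ((gamma k Rm) ^ 2) (tfotimes k k)) /\
      (forall k, In k Lambda -> gamma k Rm <= C * sqrt (1 + mnorm Rm)).
Proof.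
  exists 2, gamma_Lambda. split.
  - intros k Hk. exact (smooth2_sqrt_weight k Hk).
  - intros Rm HRm. destruct (is_tfsym_exists_tfsym Rm HRm) as (a & b & ->).
    unfold gamma_Lambda; cbn [tfsym m11 m12].
    split; [|split; [|split]].
    + intros k Hk. now apply sqrt_lt_R0, weight_pos.
    + intros k _. now rewrite weight_vopp.
    + rewrite (msum_Lambda_ext_in _ (fun k => mscale (weight k a b) (tfotimes k k))).
      * symmetry. apply msum_Lambda_weight.
      * intros k Hk. rewrite pow2_sqrt; [reflexivity|]. now apply Rlt_le, weight_pos.
    + intros k Hk. now apply sqrt_weight_le.
Qed.
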